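(* Under the setting, assumptions (A1)–(A2) and the algorithm PDAc-L described in the context, fix any $(x^\star,y^\star)\in\Omega$ and let $J(x,y)=\mathcal L(x,y^\star)-\mathcal L(x^\star,y)$. Then for every $n\ge1$, $$\tau_nJ(x_n,y_n)\le\langle x_{n+1}-z_{n+1},x^\star-x_{n+1}\rangle+\frac1\beta\langle y_n-y_{n-1},y^\star-y_n\rangle+\psi\delta_n\langle x_n-z_{n+1},x_{n+1}-x_n\rangle+\tau_n\langle\theta_n,x_n-x_{n+1}\rangle+\tau_n\Phi_n^y.$$
   Context: Let $f:\mathbb{R}^p\to(-\infty,+\infty]$ and $g:\mathbb{R}^q\to(-\infty,+\infty]$ be proper closed convex functions; $f^*(y)=\sup_u\{\langle y,u\rangle-f(u)\}$ is the Fenchel conjugate, $\mathrm{dom}(h)=\{x:h(x)<+\infty\}$, and for $\lambda>0$, $\mathrm{Prox}_{\lambda h}(x)=\arg\min_u\{h(u)+\frac{1}{2\lambda}\|u-x\|^2\}$. Let $\Phi:\mathrm{dom}(g)\times\mathrm{dom}(f^* )\to\mathbb{R}$ be continuous and $\mathcal L(x,y)=g(x)+\Phi(x,y)-f^*(y)$. Let $\Omega$ be the set of $(x^\star,y^\star)\in\mathrm{dom}(g)\times\mathrm{dom}(f^* )$ with $-\nabla_x\Phi(x^\star,y^\star)\in\partial g(x^\star)$ and $\nabla_y\Phi(x^\star,y^\star)\in\partial f^*(y^\star)$. Assume: (A1) $\Omega\neq\emptyset$, $\mathrm{dom}(g)\times\mathrm{dom}(f^* )\subseteq\mathrm{dom}(\Phi)$,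 and $\mathcal L(x^\star,y^\star)$ is finite; (A2) for each $y\in\mathrm{dom}(f^* )$, $\Phi(\cdot,y)$ is convex and differentiable, for each $x\in\mathrm{dom}(g)$, $\Phi(x,\cdot)$ is concave and differentiable, and for all bounded $\mathcal X\subset\mathbb R^q$, $\mathcal Y\subset\mathbb R^p$ there exist $L_{yy},L_{xx}\ge 0$, $L_{xy}>0$ with $\|\nabla_y\Phi(x,y)-\nabla_y\Phi(x,\tilde y)\|\le L_{yy}\|y-\tilde y\|$ and $\|\nabla_x\Phi(x,y)-\nabla_x\Phi(\tilde x,\tilde y)\|\le L_{xx}\|x-\tilde x\|+L_{xy}\|y-\tilde y\|$ for all $x,\tilde x\in\mathcal X\cap\mathrm{dom}(g)$, $y,\tilde y\in\mathcal Y\cap\mathrm{dom}(f^* )$. Algorithm PDAc-L: choose $\psi\in(1,1+\sqrt3)$, $\xi>0$, $\varphi>1$ with $\omega:=2\psi-\xi-\frac{\psi^3\varphi}{1+\psi}>0$, $\tau_{\max}>0$, $\nu\in(0,1)$, $\mu\in(0,1)$, $\eta\in[0,1)$, an integer $M\ge1$, $\beta>0$, $x_0\in\mathrm{dom}(g)$, $y_0\in\mathrm{dom}(f^* )$, $\tau_0\in(0,\tau_{\max}]$; set $z_0=x_0$, $\delta_0=1$. For $n=1,2,\dots$: (1) $z_n=\frac{\psi-1}{\psi}x_{n-1}+\frac1\psi z_{n-1}$ and $x_n=\mathrm{Prox}_{\tau_{n-1}g}(z_n-\tau_{n-1}\nabla_x\Phi(x_{n-1},y_{n-1}))$. (2)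 Let $\tau=\min\{\varphi\tau_{n-1},\tau_{\max}\}$; set $\tau_n=\tau\mu^i$ and $y_n=\mathrm{Prox}_{\beta\tau_n f^*}(y_{n-1}+\beta\tau_n\nabla_y\Phi(x_n,y_{n-1}))$, where $i$ is the smallest nonnegative integer such that $\frac{\tau_n\tau_{n-1}}{\xi}\|\theta_n\|^2+2\tau_n\Phi_n^y\le\nu r_n+(1-\nu)c_n$, with $\theta_n=\nabla_x\Phi(x_n,y_n)-\nabla_x\Phi(x_{n-1},y_{n-1})$, $\Phi_n^y=\Phi(x_n,y_{n-1})+\langle\nabla_y\Phi(x_n,y_{n-1}),y_n-y_{n-1}\rangle-\Phi(x_n,y_n)$, $r_n=\omega\delta_{n-1}\|x_n-x_{n-1}\|^2+\frac1\beta\|y_n-y_{n-1}\|^2$, $c_n=\frac{\eta}{|\mathcal I_n|}\sum_{i\in\mathcal I_n}r_i$, $\mathcal I_n=\{n-1,n-2,\dots,\max\{n-M,1\}\}$ (the $r_i$ for $i<n$ being the values from earlier iterations; for $n=1$, $\mathcal I_1=\emptyset$ and $c_1:=0$). (3) $\delta_n=\tau_n/\tau_{n-1}$. *)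

From HB Require Import structures.
From mathcomp Require Import all_boot all_order all_algebra.
From mathcomp Require Import all_classical all_reals all_analysis.
Set Implicit Arguments. Unset Strict Implicit. Unset Printing Implicit Defensive.
Import Order.TTheory GRing.Theory Num.Theory.
Import numFieldNormedType.Exports.
Local Open Scope classical_set_scope.
Local Open Scope ring_scope.

Section Defs.
Variable R : realType.

Definition dot n (u v : 'rV[R]_n) : R := \sum_(i < n) u 0 i * v 0 i.
Definition enorm n (u : 'rV[R]_n) : R := Num.sqrt (dot u u).

Definition edom n (h : 'rV[R]_n -> \bar R) : set 'rV[R]_n :=
  [set u | (h u < +oo)%E].

Definition proper_fun n (h : 'rV[R]_n -> \bar R) : Prop :=
  (forall u, h u != -oo%E) /\ (exists u, (h u < +oo)%E).

Definition closed_fun n (h : 'rV[R]_n -> \bar R) : Prop :=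
  closed [set ua : 'rV[R]_n * R | (h ua.1 <= ua.2%:E)%E].

Definition convex_efun n (h : 'rV[R]_n -> \bar R) : Prop :=
  forall u v (t : R), 0 <= t <= 1 -> (h u < +oo)%E -> (h v < +oo)%E ->
    (h (t *: u + (1 - t) *: v)%R <= t%:E * h u + (1 - t)%R%:E * h v)%E.

Definition convex_on n (D : set 'rV[R]_n) (F : 'rV[R]_n -> R) : Prop :=
  forall u v (t : R), 0 <= t <= 1 -> D u -> D v ->
    F (t *: u + (1 - t) *: v) <= t * F u + (1 - t) * F v.

Definition concave_on n (D : set 'rV[R]_n) (F : 'rV[R]_n -> R) : Prop :=
  convex_on D (fun u => - F u).

Definition fconj n (h : 'rV[R]_n -> \bar R) (y : 'rV[R]_n) : \bar R :=
  ereal_sup [set ((dot y u)%:E - h u)%E | u in [set: 'rV[R]_n]].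

Definition subdiff n (h : 'rV[R]_n -> \bar R) (x : 'rV[R]_n) : set 'rV[R]_n :=
  [set v | forall u, (h x + (dot v (u - x)%R)%:E <= h u)%E].

Definition is_prox n (lam : R) (h : 'rV[R]_n -> \bar R) (v u : 'rV[R]_n) : Prop :=
  forall w, (h u + ((enorm (u - v)%R) ^+ 2 / (2 * lam))%:E
             <= h w + ((enorm (w - v)%R) ^+ 2 / (2 * lam))%:E)%E.

Definition has_grad n (F : 'rV[R]_n -> R) (x G : 'rV[R]_n) : Prop :=
  forall e : R, 0 < e ->
    \forall h \near (0 : 'rV[R]_n),
      `|F (x + h) - F x - dot G h| <= e * enorm h.

Definition ebounded n (S : set 'rV[R]_n) : Prop :=
  exists Mb : R, forall u, S u -> enorm u <= Mb.

Definition omegaPD (psi xi phi : R) : R :=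
  2 * psi - xi - psi ^+ 3 * phi / (1 + psi).

End Defs.

Section PDAcL.
Variables (R : realType) (p q : nat).
Variables (g : 'rV[R]_q -> \bar R) (f : 'rV[R]_p -> \bar R).
Variable Phi : 'rV[R]_q -> 'rV[R]_p -> R.
Variables (Gx : 'rV[R]_q -> 'rV[R]_p -> 'rV[R]_q) (Gy : 'rV[R]_q -> 'rV[R]_p -> 'rV[R]_p).
Variables (psi xi phi taumax nu mu eta beta : R) (M : nat).
Variables (x z : nat -> 'rV[R]_q) (y : nat -> 'rV[R]_p) (tau delta : nat -> R).

Definition pd_r (i : nat) : R :=
  omegaPD psi xi phi * delta i.-1 * enorm (x i - x i.-1) ^+ 2
  + beta^-1 * enorm (y i - y i.-1) ^+ 2.

Definition pd_c (n : nat) : R :=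
  if n == 1%N then 0 else
  eta / (n - maxn (n - M) 1)%:R * \sum_(maxn (n - M) 1 <= i < n) pd_r i.

Definition pd_ls (n : nat) (t : R) (yt : 'rV[R]_p) : Prop :=
  let theta := Gx (x n) yt - Gx (x n.-1) (y n.-1) in
  let Phiy := Phi (x n) (y n.-1) + dot (Gy (x n) (y n.-1)) (yt - y n.-1)
              - Phi (x n) yt in
  let rt := omegaPD psi xi phi * delta n.-1 * enorm (x n - x n.-1) ^+ 2
            + beta^-1 * enorm (yt - y n.-1) ^+ 2 in
  t * tau n.-1 / xi * enorm theta ^+ 2 + 2 * t * Phiy
    <= nu * rt + (1 - nu) * pd_c n.

(* the sequences (x_n, y_n, z_n, tau_n, delta_n) are generated by PDAc-L
   (x_0, y_0, tau_0 are the initial data) *)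
Definition PDAcL_run : Prop :=
  [/\ z 0%N = x 0%N /\ delta 0%N = 1,
   forall n, (0 < n)%N ->
     z n = ((psi - 1) / psi) *: x n.-1 + psi^-1 *: z n.-1,
   forall n, (0 < n)%N ->
     is_prox (tau n.-1) g (z n - tau n.-1 *: Gx (x n.-1) (y n.-1)) (x n),
   forall n, (0 < n)%N ->
     exists i : nat,
       [/\ tau n = Num.min (phi * tau n.-1) taumax * mu ^+ i,
           is_prox (beta * tau n) (fconj f)
             (y n.-1 + (beta * tau n) *: Gy (x n) (y n.-1)) (y n),
           pd_ls n (tau n) (y n) &
           forall j : nat, (j < i)%N ->
             forall yt : 'rV[R]_p,
               let tj := Num.min (phi * tau n.-1) taumax * mu ^+ j in
               is_prox (beta * tj) (fconj f)
                 (y n.-1 + (beta * tj) *: Gy (x n) (y n.-1)) yt ->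
               ~ pd_ls n tj yt] &
   forall n, (0 < n)%N -> delta n = tau n / tau n.-1].

End PDAcL.

From HB Require Import structures.
From mathcomp Require Import all_boot all_order all_algebra.
From mathcomp Require Import all_classical all_reals all_analysis.
From mathcomp Require Import ring lra.
Set Implicit Arguments. Unset Strict Implicit. Unset Printing Implicit Defensive.
Import Order.TTheory GRing.Theory Num.Theory.
Import numFieldNormedType.Exports.
Local Open Scope classical_set_scope.
Local Open Scope ring_scope.

(* Each prox step is a variational inequality: x_{n+1} tested against x*,
   x_n tested against x_{n+1} (weighted by delta_n = tau_n / tau_{n-1}), and
   y_n tested against y*.  Adding the gradient inequalities of the convex
   Phi(., y_n) between x_n and x* and of the concave Phi(x_n, .) between
   y_{n-1} and y*, the values of g and f^* at x_{n+1} cancel and what is left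
   is tau_n J(x_n, y_n); the update of z turns delta_n <x_n - z_n, .> into
   psi delta_n <x_n - z_{n+1}, .>. *)

Ltac dot_ring :=
  rewrite /dot ?mulr_sumr -?sumrN -?sumrB -?big_split /=;
  apply: eq_bigr => ? _; rewrite !mxE; ring.

Section Euclidean.
Variables (R : realType) (n : nat).
Implicit Types (u v : 'rV[R]_n).

Lemma dot_ge0 u : 0 <= dot u u.
Proof. by apply: sumr_ge0 => i _; rewrite -expr2 sqr_ge0. Qed.

Lemma enorm_ge0 u : 0 <= enorm u.
Proof. exact: sqrtr_ge0. Qed.

Lemma sqr_enorm u : enorm u ^+ 2 = dot u u.
Proof. by rewrite /enorm sqr_sqrtr // dot_ge0. Qed.

Lemma enormZ u t : 0 <= t -> enorm (t *: u) = t * enorm u.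
Proof.
move=> t_ge0; rewrite /enorm.
have -> : dot (t *: u) (t *: u) = t ^+ 2 * dot u u by dot_ring.
by rewrite sqrtrM ?sqr_ge0 // sqrtr_sqr ger0_norm.
Qed.

Lemma dot_extrapolation (psi : R) (b z1 z2 w : 'rV[R]_n) : psi != 0 ->
  z2 = ((psi - 1) / psi) *: b + psi^-1 *: z1 ->
  psi * dot (b - z2) w = dot (b - z1) w.
Proof.
by move=> psi_neq0 ->; rewrite /dot mulr_sumr; apply: eq_bigr => i _;
  rewrite !mxE; field.
Qed.

End Euclidean.

Lemma ler_addgt0Mr (R : realFieldType) (a b N : R) : 0 <= N ->
  (forall t, 0 < t <= 1 -> a <= b + t * N) -> a <= b.
Proof.
move=> N_ge0 small; apply/ler_addgt0Pr => e e_gt0.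
have eN_gt0 : 0 < e + N by rewrite ltr_wpDr.
set t := e / (e + N).
have t01 : 0 < t <= 1 by rewrite divr_gt0 //= ler_pdivrMr // mul1r lerDl.
have : t * N <= e by rewrite mulrAC ler_pdivrMr //; nra.
by have := small t t01; lra.
Qed.

Section ConvexAnalysis.
Variables (R : realType) (n : nat).
Implicit Types (h : 'rV[R]_n -> \bar R) (F : 'rV[R]_n -> R).

Lemma edom_EFin h u : h u != -oo%E -> edom h u -> exists r, h u = r%:E.
Proof. by rewrite /edom /=; case: (h u) => [r _ _| |] //; exists r. Qed.

Lemma convex_on_has_grad_le (D : set 'rV[R]_n) F x w G :
  convex_on D F -> D x -> D w -> has_grad F x G -> F x + dot G (w - x) <= F w.
Proof.
move=> cvxF Dx Dw gradF; set d := w - x.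
suff : dot G d <= F w - F x by lra.
apply: (ler_addgt0Mr (enorm_ge0 d)) => e /andP[e_gt0 _].
have /nbhs_norm0P[eps /= eps_gt0 near_x] := gradF e e_gt0.
have nd_ge0 : 0 <= `|d| by [].
set t := eps / (eps + `|d|).
have t_gt0 : 0 < t by rewrite divr_gt0 // ltr_wpDr.
have t_le1 : t <= 1 by rewrite ler_pdivrMr ?mul1r ?lerDl // ltr_wpDr.
have : `|t *: d| < eps.
  by rewrite normrZ gtr0_norm // mulrAC ltr_pdivrMr ?ltr_wpDr //; nra.
move=> /near_x.
have -> : x + t *: d = t *: w + (1 - t) *: x by apply/rowP => i; rewrite !mxE; ring.
have -> : dot G (t *: d) = t * dot G d by dot_ring.
rewrite (enormZ _ (ltW t_gt0)) => /ler_normlP[linear_lower _].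
have t01 : 0 <= t <= 1 by rewrite ltW.
have jensen := cvxF w x t t01 Dw Dx.
rewrite -(ler_pM2l t_gt0); lra.
Qed.

Lemma has_grad_opp F x G : has_grad F x G -> has_grad (fun u => - F u) x (- G).
Proof.
move=> gradF e e_gt0; apply: filterS (gradF e e_gt0) => u.
have -> : dot (- G) u = - dot G u by dot_ring.
by rewrite -normrN; congr (`|_| <= _); ring.
Qed.

Lemma is_prox_edom lam h v u : proper_fun h -> is_prox lam h v u -> edom h u.
Proof.
move=> [h_neqNy [w0 hw0]] /(_ w0); rewrite /edom /=.
move: (h_neqNy u); case: (h u) => [r _ _| |] //; first exact: ltry.
by move=> _; move: hw0; case: (h w0).
Qed.

Lemma is_prox_le lam h v u w (U W : R) : 0 < lam -> convex_efun h ->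
  is_prox lam h v u -> h u = U%:E -> h w = W%:E ->
  dot (v - u) (w - u) <= lam * (W - U).
Proof.
move=> lam_gt0 cvx_h prox hu hw.
set D := dot (u - v) (w - u); set N := dot (w - u) (w - u).
have -> : dot (v - u) (w - u) = - D by rewrite /D; dot_ring.
suff : lam * (U - W) <= D by lra.
apply: (@ler_addgt0Mr _ _ _ (N / 2)); first by rewrite divr_ge0 ?dot_ge0.
move=> t /andP[t_gt0 t_le1].
have t01 : 0 <= t <= 1 by rewrite ltW.
set wt := t *: w + (1 - t) *: u.
have jensen := cvx_h w u t t01; rewrite hw hu in jensen.
have := le_trans (prox wt) (leeD2r _ (jensen (ltry _) (ltry _))).
rewrite hu -!EFinM -!EFinD lee_fin !sqr_enorm.
have -> : dot (wt - v) (wt - v) = dot (u - v) (u - v) + (2 * t * D + t ^+ 2 * N).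
  by rewrite /D /N; dot_ring.
move=> prox_vs_jensen.
have : t * (U - W) * (2 * lam) <= 2 * t * D + t ^+ 2 * N.
  by rewrite -ler_pdivlMr ?mulr_gt0 //; lra.
by move=> scaled; rewrite -(ler_pM2l t_gt0); lra.
Qed.

Lemma fenchel_young h y u r : h u = r%:E -> ((dot y u - r)%:E <= fconj h y)%E.
Proof. by move=> hu; apply: ereal_sup_ubound; exists u => //; rewrite hu. Qed.

Lemma fconj_neqNy h y : proper_fun h -> fconj h y != -oo%E.
Proof.
move=> [h_neqNy [u hu]]; have [r /(fenchel_young y)] := edom_EFin (h_neqNy u) hu.
by case: (fconj h y).
Qed.

Lemma fconj_proper h y : proper_fun h -> edom (fconj h) y -> proper_fun (fconj h).
Proof. by move=> ph hy; split; [move=> ?; exact: fconj_neqNy | exists y]. Qed.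

Lemma fconj_convex h : proper_fun h -> convex_efun (fconj h).
Proof.
move=> ph u v t /andP[t_ge0 t_le1] hu hv.
have [a ha] := edom_EFin (fconj_neqNy u ph) hu.
have [b hb] := edom_EFin (fconj_neqNy v ph) hv.
rewrite ha hb -!EFinM -EFinD; apply: ge_ereal_sup => _ [w _ <-].
case: ph => h_neqNy _; case hw: (h w) => [r| |] /=.
- have := fenchel_young u hw; rewrite ha lee_fin => young_u.
  have := fenchel_young v hw; rewrite hb lee_fin => young_v.
  have -> : dot (t *: u + (1 - t) *: v) w = t * dot u w + (1 - t) * dot v w.
    by dot_ring.
  rewrite lee_fin; nra.
- by rewrite leNye.
- by have := h_neqNy w; rewrite hw.
Qed.

End ConvexAnalysis.

Section ForwardBackwardEstimates.
Variables (R : realType) (n : nat).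

Lemma primal_step_estimate (g : 'rV[R]_n -> \bar R) (F : 'rV[R]_n -> R)
    (T0 T : R) (xs a b z1 z2 Gn Gp : 'rV[R]_n) (gxs ga gb : R) :
  convex_efun g -> convex_on (edom g) F -> has_grad F b Gn -> 0 < T0 -> 0 < T ->
  is_prox T g (z2 - T *: Gn) a -> is_prox T0 g (z1 - T0 *: Gp) b ->
  g xs = gxs%:E -> g a = ga%:E -> g b = gb%:E ->
  T * (gb - gxs + (F b - F xs))
    <= dot (a - z2) (xs - a) + T / T0 * dot (b - z1) (a - b)
       + T * dot (Gn - Gp) (b - a).
Proof.
move=> cvx_g cvxF gradF T0_gt0 T_gt0 prox_a prox_b gxs_E ga_E gb_E.
have := is_prox_le T_gt0 cvx_g prox_a ga_E gxs_E.
have -> : dot (z2 - T *: Gn - a) (xs - a)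
    = - dot (a - z2) (xs - a) - T * dot Gn (xs - a) by dot_ring.
move=> prox_a_at_xs.
have := is_prox_le T0_gt0 cvx_g prox_b gb_E ga_E.
have -> : dot (z1 - T0 *: Gp - b) (a - b)
    = - dot (b - z1) (a - b) - T0 * dot Gp (a - b) by dot_ring.
move=> /(ler_wpM2l (divr_ge0 (ltW T_gt0) (ltW T0_gt0))).
rewrite mulrBr !mulrA divfK ?gt_eqF // => prox_b_at_a.
have dom_b : edom g b by rewrite /edom /= gb_E ltry.
have dom_xs : edom g xs by rewrite /edom /= gxs_E ltry.
have := convex_on_has_grad_le cvxF dom_b dom_xs gradF.
have -> : dot Gn (xs - b) = dot Gn (xs - a) + dot Gn (a - b) by dot_ring.
move=> /(ler_wpM2l (ltW T_gt0)) grad_ineq.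
have -> : dot (Gn - Gp) (b - a) = dot Gp (a - b) - dot Gn (a - b) by dot_ring.
lra.
Qed.

Lemma dual_step_estimate (h : 'rV[R]_n -> \bar R) (H : 'rV[R]_n -> R)
    (beta T : R) (ys ym yn Gyy : 'rV[R]_n) (hys hyn : R) :
  convex_efun h -> concave_on (edom h) H -> has_grad H ym Gyy -> edom h ym ->
  0 < beta -> 0 < T -> is_prox (beta * T) h (ym + (beta * T) *: Gyy) yn ->
  h ys = hys%:E -> h yn = hyn%:E ->
  T * (hyn - hys + (H ys - H yn))
    <= beta^-1 * dot (yn - ym) (ys - yn) + T * (H ym + dot Gyy (yn - ym) - H yn).
Proof.
move=> cvx_h ccvH gradH dom_ym beta_gt0 T_gt0 prox_yn hys_E hyn_E.
have := is_prox_le (mulr_gt0 beta_gt0 T_gt0) cvx_h prox_yn hyn_E hys_E.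
have -> : dot (ym + (beta * T) *: Gyy - yn) (ys - yn)
    = - dot (yn - ym) (ys - yn) + beta * T * dot Gyy (ys - yn) by dot_ring.
have beta_inv_ge0 : 0 <= beta^-1 by rewrite invr_ge0 ltW.
move=> /(ler_wpM2l beta_inv_ge0).
rewrite mulrDr !mulrA mulVf ?gt_eqF // !mul1r => prox_yn_at_ys.
have dom_ys : edom h ys by rewrite /edom /= hys_E ltry.
have := convex_on_has_grad_le ccvH dom_ym dom_ys (has_grad_opp gradH).
have -> : dot (- Gyy) (ys - ym) = - dot Gyy (ys - yn) - dot Gyy (yn - ym).
  by dot_ring.
move=> /(ler_wpM2l (ltW T_gt0)) grad_ineq.
lra.
Qed.

End ForwardBackwardEstimates.

Section PDAcLIterates.
Variables (R : realType) (p q : nat).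
Variables (g : 'rV[R]_q -> \bar R) (f : 'rV[R]_p -> \bar R).
Variable Phi : 'rV[R]_q -> 'rV[R]_p -> R.
Variables (Gx : 'rV[R]_q -> 'rV[R]_p -> 'rV[R]_q) (Gy : 'rV[R]_q -> 'rV[R]_p -> 'rV[R]_p).
Variables (psi xi phi taumax nu mu eta beta : R) (M : nat).
Variables (x z : nat -> 'rV[R]_q) (y : nat -> 'rV[R]_p) (tau delta : nat -> R).
Hypothesis run :
  PDAcL_run g f Phi Gx Gy psi xi phi taumax nu mu eta beta M x z y tau delta.

Lemma PDAcL_tau_gt0 : 0 < phi -> 0 < taumax -> 0 < mu -> 0 < tau 0 ->
  forall k, 0 < tau k.
Proof.
case: run => _ _ _ step_y _ phi_gt0 taumax_gt0 mu_gt0 tau0_gt0.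
elim=> [//|k tauk_gt0]; have [i [-> _ _ _]] := step_y k.+1 isT.
by rewrite mulr_gt0 ?exprn_gt0 // lt_min taumax_gt0 mulr_gt0.
Qed.

Lemma PDAcL_x_edom : proper_fun g -> forall k, (0 < k)%N -> edom g (x k).
Proof.
by case: run => _ _ step_x _ _ pg k k_gt0; apply: is_prox_edom pg (step_x k k_gt0).
Qed.

Lemma PDAcL_y_edom : proper_fun f -> edom (fconj f) (y 0) ->
  forall k, edom (fconj f) (y k).
Proof.
case: run => _ _ _ step_y _ pf dom_y0 [//|k].
have [i [_ prox_y _ _]] := step_y k.+1 isT.
exact: is_prox_edom (fconj_proper pf dom_y0) prox_y.
Qed.

End PDAcLIterates.

Theorem lemma3p1 (R : realType) (p q : nat)
  (f : 'rV[R]_p -> \bar R) (g : 'rV[R]_q -> \bar R)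
  (Phi : 'rV[R]_q -> 'rV[R]_p -> R)
  (Gx : 'rV[R]_q -> 'rV[R]_p -> 'rV[R]_q) (Gy : 'rV[R]_q -> 'rV[R]_p -> 'rV[R]_p)
  (* f, g proper closed convex *)
  (hf : [/\ proper_fun f, closed_fun f & convex_efun f])
  (hg : [/\ proper_fun g, closed_fun g & convex_efun g])
  (* Phi continuous on dom g x dom f^* *)
  (hPhic : {within edom g `*` edom (fconj f),
             continuous (fun xy : 'rV[R]_q * 'rV[R]_p => Phi xy.1 xy.2)})
  (* (A2): convexity / concavity and differentiability with gradients Gx, Gy *)
  (hcvx : forall yy, edom (fconj f) yy -> convex_on (edom g) (fun u => Phi u yy))
  (hccv : forall xx, edom g xx -> concave_on (edom (fconj f)) (Phi xx))
  (hGx : forall xx yy, edom g xx -> edom (fconj f) yy ->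
           has_grad (fun u => Phi u yy) xx (Gx xx yy))
  (hGy : forall xx yy, edom g xx -> edom (fconj f) yy ->
           has_grad (Phi xx) yy (Gy xx yy))
  (hLip : forall (X : set 'rV[R]_q) (Y : set 'rV[R]_p), ebounded X -> ebounded Y ->
     exists Lyy Lxx Lxy : R, [/\ 0 <= Lyy, 0 <= Lxx, 0 < Lxy &
       forall x1 x2 y1 y2, X x1 -> X x2 -> Y y1 -> Y y2 ->
         edom g x1 -> edom g x2 -> edom (fconj f) y1 -> edom (fconj f) y2 ->
         enorm (Gy x1 y1 - Gy x1 y2) <= Lyy * enorm (y1 - y2) /\
         enorm (Gx x1 y1 - Gx x2 y2) <= Lxx * enorm (x1 - x2) + Lxy * enorm (y1 - y2)])
  (* a saddle point (xs, ys) in Omega, with L(xs, ys) finite (A1) *)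
  (xs : 'rV[R]_q) (ys : 'rV[R]_p)
  (hxs : edom g xs) (hys : edom (fconj f) ys)
  (hOmx : subdiff g xs (- Gx xs ys)) (hOmy : subdiff (fconj f) ys (Gy xs ys))
  (hLfin : (g xs + (Phi xs ys)%:E - fconj f ys)%E \is a fin_num)
  (* parameters of PDAc-L *)
  (psi xi phi taumax nu mu eta beta : R) (M : nat)
  (hpsi : 1 < psi < 1 + Num.sqrt 3) (hxi : 0 < xi) (hphi : 1 < phi)
  (homega : 0 < omegaPD psi xi phi) (htaumax : 0 < taumax)
  (hnu : 0 < nu < 1) (hmu : 0 < mu < 1) (heta : 0 <= eta < 1)
  (hM : (1 <= M)%N) (hbeta : 0 < beta)
  (* iterates *)
  (x z : nat -> 'rV[R]_q) (y : nat -> 'rV[R]_p) (tau delta : nat -> R)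
  (hx0 : edom g (x 0%N)) (hy0 : edom (fconj f) (y 0%N))
  (htau0 : 0 < tau 0%N <= taumax)
  (hrun : PDAcL_run g f Phi Gx Gy psi xi phi taumax nu mu eta beta M x z y tau delta) :
  let L := fun (u : 'rV[R]_q) (v : 'rV[R]_p) => (g u + (Phi u v)%:E - fconj f v)%E in
  let J := fun u v => (L u ys - L xs v)%E in
  forall n : nat, (1 <= n)%N ->
    let theta := Gx (x n) (y n) - Gx (x n.-1) (y n.-1) in
    let Phiy := Phi (x n) (y n.-1) + dot (Gy (x n) (y n.-1)) (y n - y n.-1)
                - Phi (x n) (y n) in
    ((tau n)%:E * J (x n) (y n)
     <= (dot (x n.+1 - z n.+1) (xs - x n.+1)
         + beta^-1 * dot (y n - y n.-1) (ys - y n)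
         + psi * delta n * dot (x n - z n.+1) (x n.+1 - x n)
         + tau n * dot theta (x n - x n.+1)
         + tau n * Phiy)%:E)%E.
Proof.
move=> L J [//|n] _ /=.
have [_ step_z step_x step_y step_delta] := hrun.
have [pf _ _] := hf; have [pg _ cvx_g] := hg.
move: hpsi hmu htau0 => /andP[psi_gt1 _] /andP[mu_gt0 _] /andP[tau0_gt0 _].
have tau_gt0 := PDAcL_tau_gt0 hrun (lt_trans ltr01 hphi) htaumax mu_gt0 tau0_gt0.
have dom_x := PDAcL_x_edom hrun pg; have dom_y := PDAcL_y_edom hrun pf hy0.
have pfs := fconj_proper pf hys.
have [gs hgs] := edom_EFin (proj1 pg _) hxs.
have [gb hgb] := edom_EFin (proj1 pg _) (dom_x n.+1 isT).
have [ga hga] := edom_EFin (proj1 pg _) (dom_x n.+2 isT).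
have [fs hfs] := edom_EFin (proj1 pfs _) hys.
have [fn hfn] := edom_EFin (proj1 pfs _) (dom_y n.+1).
have [_ [_ prox_y _ _]] := step_y n.+1 isT.
have primal := primal_step_estimate cvx_g (hcvx _ (dom_y n.+1))
  (hGx _ _ (dom_x n.+1 isT) (dom_y n.+1)) (tau_gt0 n) (tau_gt0 n.+1)
  (step_x n.+2 isT) (step_x n.+1 isT) hgs hga hgb.
have dual := dual_step_estimate (fconj_convex pf) (hccv _ (dom_x n.+1 isT))
  (hGy _ _ (dom_x n.+1 isT) (dom_y n)) (dom_y n) hbeta (tau_gt0 n.+1)
  prox_y hfs hfn.
have psi_neq0 : psi != 0 by rewrite gt_eqF // (lt_trans ltr01 psi_gt1).
have z_step : z n.+2 = ((psi - 1) / psi) *: x n.+1 + psi^-1 *: z n.+1.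
  exact: step_z.
rewrite -[psi * _ * _]mulrA mulrCA (dot_extrapolation _ psi_neq0 z_step) step_delta //.
rewrite /J /L hgb hgs hfn hfs -!EFinD ?(EFinN, EFinB) -EFinM lee_fin.
lra.
Qed.
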